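(* Let $F(z)=\sum_{k=0}^\infty b_k z^k\in\mathcal{B}$ with $b_1=a\in(0,1)$, and let $0<r\le 1/\sqrt3$. Then for every integer $n\ge 2$, \[ \sum_{k=2}^n k|b_k|^2r^{2k}\le \frac{3(9-4a^2)^2}{64a^4}\sum_{k=2}^n\frac1k\left(\frac43a^2r^2\right)^k. \]
   Context: $\mathbb{D}$ denotes the open unit disc. $\mathcal{B}$ is the class of functions $F$ analytic in $\mathbb{D}$ satisfying $|F'(z)|\le \frac{1}{1-|z|^2}$ for all $z\in\mathbb{D}$. For $F\in\mathcal{B}$ we write its Taylor expansion as $F(z)=\sum_{k=0}^\infty b_k z^k$. *)

From Stdlib Require Import Reals.
Open Scope R_scope.

Definition Cplx := (R * R)%type.
Definition Cadd (z w : Cplx) : Cplx := (fst z + fst w, snd z + snd w).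
Definition Cmul (z w : Cplx) : Cplx :=
  (fst z * fst w - snd z * snd w, fst z * snd w + snd z * fst w).
Definition Cscale (t : R) (z : Cplx) : Cplx := (t * fst z, t * snd z).
Fixpoint Cpow (z : Cplx) (n : nat) : Cplx :=
  match n with O => (1, 0) | S m => Cmul z (Cpow z m) end.
Definition Cmod (z : Cplx) : R := sqrt (fst z ^ 2 + snd z ^ 2).

Definition Cseries (f : nat -> Cplx) (s : Cplx) : Prop :=
  Un_cv (fun N => sum_f_R0 (fun k => fst (f k)) N) (fst s) /\
  Un_cv (fun N => sum_f_R0 (fun k => snd (f k)) N) (snd s).

(* F(z) = sum_k b_k z^k is analytic in the unit disc D (its Taylor series at 0
   converges on all of D), and F'(z) = sum_k (k+1) b_(k+1) z^k satisfies
   |F'(z)| <= 1/(1-|z|^2) for all z in D. *)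
Definition in_class_B (b : nat -> Cplx) : Prop :=
  forall z : Cplx, Cmod z < 1 ->
    (exists s, Cseries (fun k => Cmul (b k) (Cpow z k)) s) /\
    (exists w, Cseries (fun k => Cscale (INR (S k)) (Cmul (b (S k)) (Cpow z k))) w
               /\ Cmod w <= 1 / (1 - Cmod z ^ 2)).

From Stdlib Require Import Reals Lra Lia Psatz.
From Coquelicot Require Complex.
Open Scope R_scope.

(* The function g(w) = (2/3) F'(w / sqrt 3) is a Schur function (|g| <= 1 on the
   unit disc) with g(0) = 2a/3 =: gam, since |F'(z)| <= 1/(1 - |z|^2) <= 3/2 for
   |z| < 1/sqrt 3.  Comparing, by Parseval on circles, the coefficients of
   g(z) (1 + nu z^(m+1)) with those of 1 + nu z^(m+1), where
   nu = gam g_(m+1) / (1 - gam^2), gives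
   sum_(j<=m) |g_j|^2 + |g_(m+1)|^2 / (1 - gam^2) <= 1.
   By induction the partial sums of |g_(i+1)|^2 are dominated by those of
   (1 - gam^2)^2 gam^(2i), and Abel summation against the decreasing weights
   (3r^2)^(i+1)/(i+2) gives the claim, because
   k |b_k|^2 r^(2k) = (9/4) r^2 |g_(k-1)|^2 (3r^2)^(k-1) / k. *)

(* [Cplx], [Cadd], [Cmul] and [Cmod] coincide definitionally with Coquelicot's
   [C], [Cplus], [Cmult] and [Cmod], so Coquelicot's lemmas apply directly. *)

Definition Cnorm2 (z : Cplx) : R := fst z ^ 2 + snd z ^ 2.
Definition Csub (z w : Cplx) : Cplx := (fst z - fst w, snd z - snd w).
Definition Cpolar (rho phi : R) : Cplx := (rho * cos phi, rho * sin phi).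
Definition Csum (f : nat -> Cplx) (n : nat) : Cplx :=
  (sum_f_R0 (fun k => fst (f k)) n, sum_f_R0 (fun k => snd (f k)) n).
Definition peval (c : nat -> Cplx) (n : nat) (z : Cplx) : Cplx :=
  Csum (fun j => Cmul (c j) (Cpow z j)) n.
(* By Parseval, the mean of |peval c n|^2 over the circle of radius [rho]. *)
Definition energy (c : nat -> Cplx) (n : nat) (rho : R) : R :=
  sum_f_R0 (fun j => Cnorm2 (c j) * rho ^ (2 * j)) n.

Lemma Cnorm2_ge0 z : 0 <= Cnorm2 z.
Proof. unfold Cnorm2; nra. Qed.

Lemma Cmod_sq z : Cmod z ^ 2 = Cnorm2 z.
Proof. exact (Complex.Cmod2_alt z). Qed.

Lemma Cnorm2_scale c z : Cnorm2 (Cscale c z) = c ^ 2 * Cnorm2 z.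
Proof. unfold Cnorm2, Cscale; simpl; ring. Qed.

Lemma Cmod_ge0 z : 0 <= Cmod z.
Proof. exact (Complex.Cmod_ge_0 z). Qed.

Lemma Cmod_mul z w : Cmod (Cmul z w) = Cmod z * Cmod w.
Proof. exact (Complex.Cmod_mult z w). Qed.

Lemma Cmod_add_le z w : Cmod (Cadd z w) <= Cmod z + Cmod w.
Proof. exact (Complex.Cmod_triangle z w). Qed.

Lemma Cmod_real x : Cmod (x, 0) = Rabs x.
Proof. exact (Complex.Cmod_R x). Qed.

Lemma Cmod_fst z : Rabs (fst z) <= Cmod z.
Proof. exact (Complex.re_le_Cmod z). Qed.

Lemma Cmod_snd z : Rabs (snd z) <= Cmod z.
Proof. eapply Rle_trans; [apply Rmax_r | apply Complex.Rmax_Cmod]. Qed.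

Lemma Cmod_le_l1 z : Cmod z <= Rabs (fst z) + Rabs (snd z).
Proof.
  destruct z as [x y]; simpl fst; simpl snd.
  replace (Cmod (x, y)) with (Cmod (Cadd (x, 0) (Cmul (0, 1) (y, 0))))
    by (unfold Cadd, Cmul; simpl; f_equal; f_equal; ring).
  eapply Rle_trans; [apply Cmod_add_le |].
  rewrite Cmod_mul, !Cmod_real.
  change (Cmod (0, 1)) with (Complex.Cmod Complex.Ci). rewrite Complex.Cmod_Ci.
  lra.
Qed.

Lemma Cscale_real c z : Cscale c z = Cmul (c, 0) z.
Proof. unfold Cscale, Cmul; simpl; f_equal; ring. Qed.

Lemma Cmod_scale c z : Cmod (Cscale c z) = Rabs c * Cmod z.
Proof. now rewrite Cscale_real, Cmod_mul, Cmod_real. Qed.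

Lemma Cpow_Complex z n : Cpow z n = Complex.Cpow z n.
Proof. induction n as [|n IH]; simpl; [reflexivity | now rewrite IH]. Qed.

Lemma Cmod_pow z n : Cmod (Cpow z n) = Cmod z ^ n.
Proof. rewrite Cpow_Complex. exact (Complex.Cmod_pow z n). Qed.

Lemma Cpow_add z i j : Cpow z (i + j) = Cmul (Cpow z i) (Cpow z j).
Proof. rewrite !Cpow_Complex. exact (Complex.Cpow_add_r z i j). Qed.

Lemma Cpow_real x n : Cpow (x, 0) n = (x ^ n, 0).
Proof. rewrite Cpow_Complex. symmetry. exact (Complex.RtoC_pow x n). Qed.

Lemma Cpow_scale c z n : Cpow (Cscale c z) n = Cscale (c ^ n) (Cpow z n).
Proof.
  rewrite !Cscale_real, <- Cpow_real, !Cpow_Complex.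
  exact (Complex.Cpow_mult_l (c, 0) z n).
Qed.

Lemma Cpow_polar rho phi j :
  Cpow (Cpolar rho phi) j = (rho ^ j * cos (INR j * phi), rho ^ j * sin (INR j * phi)).
Proof.
  induction j as [|j IH].
  - simpl. rewrite Rmult_0_l, cos_0, sin_0. f_equal; ring.
  - simpl Cpow. rewrite IH, S_INR.
    replace ((INR j + 1) * phi) with (phi + INR j * phi) by ring.
    rewrite cos_plus, sin_plus. unfold Cmul, Cpolar; simpl. f_equal; ring.
Qed.

Lemma Cmod_polar rho phi : 0 <= rho -> Cmod (Cpolar rho phi) = rho.
Proof.
  intros Hrho. unfold Cmod, Cpolar; simpl fst; simpl snd.
  replace ((rho * cos phi) ^ 2 + (rho * sin phi) ^ 2)
    with (rho ^ 2 * (sin phi ^ 2 + cos phi ^ 2)) by ring.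
  rewrite <- !Rsqr_pow2, sin2_cos2, Rmult_1_r, Rsqr_pow2.
  now apply sqrt_pow2.
Qed.

(** * Finite sums and Parseval's identity at roots of unity *)

Lemma sum_mul_l (f : nat -> R) c n : c * sum_f_R0 f n = sum_f_R0 (fun i => c * f i) n.
Proof. rewrite scal_sum. apply sum_eq; intros; ring. Qed.

Lemma sum_sq (f : nat -> R) n :
  sum_f_R0 f n ^ 2 = sum_f_R0 (fun j => sum_f_R0 (fun l => f j * f l) n) n.
Proof.
  replace (sum_f_R0 f n ^ 2) with (sum_f_R0 f n * sum_f_R0 f n) by ring.
  rewrite scal_sum. apply sum_eq; intros j _. apply sum_mul_l.
Qed.

Lemma sum_swap (F : nat -> nat -> R) K n :
  sum_f_R0 (fun k => sum_f_R0 (fun j => F k j) n) K =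
  sum_f_R0 (fun j => sum_f_R0 (fun k => F k j) K) n.
Proof.
  induction K as [|K IH]; [reflexivity|].
  rewrite tech5, IH, <- sum_plus. apply sum_eq; intros; reflexivity.
Qed.

Lemma sum_delta (f : nat -> R) c j n : (j <= n)%nat ->
  sum_f_R0 (fun l => f l * (if Nat.eqb j l then c else 0)) n = f j * c.
Proof.
  induction n as [|n IH]; intros Hj.
  - replace j with 0%nat by lia. reflexivity.
  - rewrite tech5. destruct (Nat.eq_dec j (S n)) as [->|Hne].
    + rewrite Nat.eqb_refl, sum_eq_R0; [ring|].
      intros l Hl. replace (Nat.eqb (S n) l) with false by (symmetry; apply Nat.eqb_neq; lia).
      ring.
    + rewrite IH by lia. replace (Nat.eqb j (S n)) with false by (symmetry; apply Nat.eqb_neq; lia).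
      ring.
Qed.

Lemma partial_sum_mono (f : nat -> R) m N : (forall i, 0 <= f i) -> (m <= N)%nat ->
  sum_f_R0 f m <= sum_f_R0 f N.
Proof.
  intros Hf HmN. destruct (Nat.eq_dec m N) as [->|Hne]; [lra|].
  rewrite (tech2 f m N) by lia.
  pose proof (cond_pos_sum (fun i => f (S m + i)%nat) (N - S m) (fun i => Hf _)). lra.
Qed.

Lemma sum_mul_antitone_le (x h w : nat -> R) :
  (forall i, w (S i) <= w i) -> (forall i, 0 <= w i) ->
  (forall p, sum_f_R0 x p <= sum_f_R0 h p) ->
  forall n, sum_f_R0 (fun i => x i * w i) n <= sum_f_R0 (fun i => h i * w i) n.
Proof.
  intros Hdec Hpos Hpart N.
  assert (Habel : forall n, sum_f_R0 (fun i => x i * w i) n - sum_f_R0 (fun i => h i * w i) n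
                            <= (sum_f_R0 x n - sum_f_R0 h n) * w n).
  { induction n as [|n IH]; [simpl; lra|].
    rewrite !tech5.
    pose proof (Hpart n). pose proof (Hdec n). pose proof (Hpos (S n)).
    assert ((sum_f_R0 x n - sum_f_R0 h n) * (w n - w (S n)) <= 0) by nra.
    nra. }
  pose proof (Habel N). pose proof (Hpart N). pose proof (Hpos N). nra.
Qed.

Lemma sum_geometric_scaled x p :
  sum_f_R0 (fun i => (1 - x) ^ 2 * x ^ i) p = (1 - x) * (1 - x ^ S p).
Proof.
  rewrite <- sum_mul_l. pose proof (GP_finite x p) as Hgp. rewrite Nat.add_1_r in Hgp.
  change (fun n => x ^ n) with (pow x) in Hgp.
  replace (x ^ S p) with (sum_f_R0 (pow x) p * (x - 1) + 1) by lra. ring.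
Qed.

Lemma sum_cos_telescope x K :
  2 * sin (x / 2) * sum_f_R0 (fun k => cos (INR k * x)) K
  = sin ((INR K + / 2) * x) + sin (x / 2).
Proof.
  induction K as [|K IH].
  - simpl. rewrite Rmult_0_l, cos_0. replace ((0 + / 2) * x) with (x / 2) by field. ring.
  - rewrite tech5, Rmult_plus_distr_l, IH, S_INR.
    replace ((INR K + / 2) * x) with ((INR K + 1) * x - x / 2) by field.
    replace ((INR K + 1 + / 2) * x) with ((INR K + 1) * x + x / 2) by field.
    rewrite sin_plus, sin_minus. ring.
Qed.

Lemma sum_sin_telescope x K :
  2 * sin (x / 2) * sum_f_R0 (fun k => sin (INR k * x)) K
  = cos (x / 2) - cos ((INR K + / 2) * x).
Proof.
  induction K as [|K IH].
  - simpl. rewrite Rmult_0_l, sin_0. replace ((0 + / 2) * x) with (x / 2) by field. ring.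
  - rewrite tech5, Rmult_plus_distr_l, IH, S_INR.
    replace ((INR K + / 2) * x) with ((INR K + 1) * x - x / 2) by field.
    replace ((INR K + 1 + / 2) * x) with ((INR K + 1) * x + x / 2) by field.
    rewrite cos_plus, cos_minus. ring.
Qed.

Lemma roots_of_unity_sums (d M : nat) : (0 < d < M)%nat ->
  let x := INR d * (2 * PI / INR M) in
  sum_f_R0 (fun k => cos (INR k * x)) (pred M) = 0 /\
  sum_f_R0 (fun k => sin (INR k * x)) (pred M) = 0.
Proof.
  intros [Hd HdM] x.
  destruct M as [|M']; [lia|]. simpl pred.
  assert (HM : 0 < INR (S M')) by (apply lt_0_INR; lia).
  assert (Hsin : 0 < sin (x / 2)).
  { assert (Hdpos : 0 < INR d) by (apply lt_0_INR; lia).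
    assert (HdMR : INR d < INR (S M')) by (apply lt_INR; lia).
    pose proof PI_RGT_0.
    replace (x / 2) with (PI * INR d * / INR (S M')) by (unfold x; field; lra).
    apply sin_gt_0.
    - apply Rmult_lt_0_compat; [nra | apply Rinv_0_lt_compat; lra].
    - apply (Rmult_lt_reg_r (INR (S M'))); [lra|].
      rewrite Rmult_assoc, Rinv_l by lra. nra. }
  assert (Hend : (INR M' + / 2) * x = - (x / 2) + 2 * INR d * PI).
  { unfold x. rewrite S_INR in HM |- *. field. lra. }
  split; apply (Rmult_eq_reg_l (2 * sin (x / 2))); try lra.
  - rewrite sum_cos_telescope, Hend, sin_period, sin_neg. ring.
  - rewrite sum_sin_telescope, Hend, cos_period, cos_neg. ring.
Qed.

Lemma roots_of_unity_orthogonality (j l M : nat) : (j < M)%nat -> (l < M)%nat ->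
  let x := (INR j - INR l) * (2 * PI / INR M) in
  sum_f_R0 (fun k => cos (INR k * x)) (pred M) = (if Nat.eqb j l then INR M else 0) /\
  sum_f_R0 (fun k => sin (INR k * x)) (pred M) = 0.
Proof.
  intros Hj Hl x.
  destruct (Nat.eq_dec j l) as [<-|Hne].
  - assert (Hx : x = 0) by (unfold x; ring).
    rewrite Nat.eqb_refl, Hx. split.
    + rewrite (sum_eq _ (fun _ => 1)) by (intros; rewrite Rmult_0_r; apply cos_0).
      rewrite sum_cte, Nat.succ_pred_pos by lia. ring.
    + apply sum_eq_R0. intros. rewrite Rmult_0_r. apply sin_0.
  - rewrite (proj2 (Nat.eqb_neq j l) Hne).
    destruct (proj1 (Nat.lt_gt_cases j l) Hne) as [Hlt|Hgt].
    + destruct (roots_of_unity_sums (l - j) M) as [Hc Hs]; [lia|].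
      assert (Hx : forall k, INR k * x = - (INR k * (INR (l - j) * (2 * PI / INR M))))
        by (intros; unfold x; rewrite minus_INR by lia; ring).
      split.
      * rewrite <- Hc. apply sum_eq. intros k _. now rewrite Hx, cos_neg.
      * rewrite <- (Rmult_0_r (-1)), <- Hs, sum_mul_l. apply sum_eq. intros k _.
        rewrite Hx, sin_neg. ring.
    + destruct (roots_of_unity_sums (j - l) M) as [Hc Hs]; [lia|].
      assert (Hx : forall k, INR k * x = INR k * (INR (j - l) * (2 * PI / INR M)))
        by (intros; unfold x; rewrite minus_INR by lia; ring).
      split; [rewrite <- Hc | rewrite <- Hs]; apply sum_eq; intros k _; now rewrite Hx.
Qed.

Lemma Cnorm2_peval_polar (c : nat -> Cplx) n rho phi :
  Cnorm2 (peval c n (Cpolar rho phi)) =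
  sum_f_R0 (fun j => sum_f_R0 (fun l =>
      (fst (c j) * fst (c l) + snd (c j) * snd (c l)) * (rho ^ j * rho ^ l)
        * cos ((INR j - INR l) * phi)
    + (fst (c j) * snd (c l) - snd (c j) * fst (c l)) * (rho ^ j * rho ^ l)
        * sin ((INR j - INR l) * phi)) n) n.
Proof.
  unfold Cnorm2, peval, Csum. simpl fst; simpl snd.
  rewrite !sum_sq, <- sum_plus. apply sum_eq; intros j _.
  rewrite <- sum_plus. apply sum_eq; intros l _.
  rewrite !Cpow_polar. unfold Cmul; simpl fst; simpl snd.
  replace ((INR j - INR l) * phi) with (INR j * phi - INR l * phi) by ring.
  rewrite cos_minus, sin_minus. ring.
Qed.

Lemma discrete_parseval (c : nat -> Cplx) (n M : nat) (rho : R) : (n < M)%nat ->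
  sum_f_R0 (fun k => Cnorm2 (peval c n (Cpolar rho (INR k * (2 * PI / INR M))))) (pred M)
  = INR M * energy c n rho.
Proof.
  intros HnM.
  set (th := 2 * PI / INR M).
  set (A j l := (fst (c j) * fst (c l) + snd (c j) * snd (c l)) * (rho ^ j * rho ^ l)).
  set (B j l := (fst (c j) * snd (c l) - snd (c j) * fst (c l)) * (rho ^ j * rho ^ l)).
  transitivity (sum_f_R0 (fun k => sum_f_R0 (fun j => sum_f_R0 (fun l =>
     A j l * cos (INR k * ((INR j - INR l) * th))
     + B j l * sin (INR k * ((INR j - INR l) * th))) n) n) (pred M)).
  { apply sum_eq; intros k _. rewrite Cnorm2_peval_polar.
    apply sum_eq; intros j _. apply sum_eq; intros l _.
    replace (INR k * ((INR j - INR l) * th)) with ((INR j - INR l) * (INR k * th)) by ring.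
    reflexivity. }
  rewrite sum_swap. unfold energy. rewrite sum_mul_l. apply sum_eq; intros j Hj.
  rewrite sum_swap.
  transitivity (sum_f_R0 (fun l => A j l * (if Nat.eqb j l then INR M else 0)) n).
  { apply sum_eq; intros l Hl.
    destruct (roots_of_unity_orthogonality j l M) as [Hc Hs]; [lia | lia |].
    rewrite sum_plus, <- !sum_mul_l. fold th in Hc, Hs. rewrite Hc, Hs. ring. }
  rewrite sum_delta by lia. unfold A, Cnorm2.
  rewrite <- pow_add. replace (j + j)%nat with (2 * j)%nat by lia. ring.
Qed.

(** * Uniform convergence of power series inside the disc *)

Lemma Un_cv_scal (u : nat -> R) l c : Un_cv u l -> Un_cv (fun n => c * u n) (c * l).
Proof.
  apply CV_mult. intros e He. exists 0%nat. intros.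
  unfold Rdist. rewrite Rminus_diag, Rabs_R0. lra.
Qed.

Lemma series_terms_bounded (t : nat -> R) L :
  Un_cv (fun N => sum_f_R0 t N) L -> exists B, forall k, Rabs (t k) <= B.
Proof.
  intros H. destruct (maj_by_pos _ (exist _ L H)) as [B [_ HB]].
  exists (2 * B). intros [|k].
  - specialize (HB 0%nat). pose proof (Rabs_pos (t 0%nat)). simpl in HB. lra.
  - pose proof (HB (S k)) as HSk. pose proof (HB k) as Hk. rewrite tech5 in HSk.
    pose proof (Rabs_triang (sum_f_R0 t k + t (S k)) (- sum_f_R0 t k)) as Htri.
    rewrite Rabs_Ropp in Htri.
    replace (sum_f_R0 t k + t (S k) + - sum_f_R0 t k) with (t (S k)) in Htri by ring.
    lra.
Qed.

Lemma Cseries_terms_bounded f s : Cseries f s -> exists B, forall k, Cmod (f k) <= B.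
Proof.
  intros [Hre Him].
  destruct (series_terms_bounded _ _ Hre) as [B1 HB1].
  destruct (series_terms_bounded _ _ Him) as [B2 HB2].
  exists (B1 + B2). intros k.
  pose proof (Cmod_le_l1 (f k)). specialize (HB1 k). specialize (HB2 k). lra.
Qed.

Lemma series_tail_le (u : nat -> R) L B q N :
  0 <= q < 1 -> (forall k, Rabs (u k) <= B * q ^ k) ->
  Un_cv (fun K => sum_f_R0 u K) L ->
  Rabs (L - sum_f_R0 u N) <= B * q ^ S N / (1 - q).
Proof.
  intros Hq Hu HL.
  assert (Hgeo : Un_cv (fun K => sum_f_R0 (fun k => B * q ^ k) K) (B * / (1 - q))).
  { apply (Un_cv_ext (fun K => B * sum_f_R0 (fun k => 1 * q ^ k) K)).
    - intro K. rewrite sum_mul_l. apply sum_eq; intros; ring.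
    - apply Un_cv_scal, GP_infinite. rewrite Rabs_pos_eq; lra. }
  pose proof (sum_maj1 (fun k _ => u k) (fun k => B * q ^ k) 0 L _ N HL Hgeo (fun k => Hu k))
    as Htail.
  unfold SP in Htail.
  rewrite <- sum_mul_l, tech3 in Htail by lra.
  replace (B * / (1 - q) - B * ((1 - q ^ S N) / (1 - q))) with (B * q ^ S N / (1 - q))
    in Htail by (field; lra).
  exact Htail.
Qed.

Lemma Cseries_tail_le f s B q N :
  0 <= q < 1 -> (forall k, Cmod (f k) <= B * q ^ k) -> Cseries f s ->
  Cmod (Csub (Csum f N) s) <= 2 * (B * q ^ S N / (1 - q)).
Proof.
  intros Hq Hf [Hre Him].
  pose proof (series_tail_le _ _ B q N Hq
    (fun k => Rle_trans _ _ _ (Cmod_fst (f k)) (Hf k)) Hre) as Tre.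
  pose proof (series_tail_le _ _ B q N Hq
    (fun k => Rle_trans _ _ _ (Cmod_snd (f k)) (Hf k)) Him) as Tim.
  eapply Rle_trans; [apply Cmod_le_l1|]. simpl fst; simpl snd.
  rewrite Rabs_minus_sym in Tre, Tim. lra.
Qed.

Lemma geometric_eventually_le C q eps : 0 <= q < 1 -> 0 <= C -> 0 < eps ->
  exists N0, forall N, (N0 <= N)%nat -> C * q ^ N <= eps.
Proof.
  intros Hq HC Heps.
  destruct (pow_lt_1_zero q ltac:(rewrite Rabs_pos_eq; lra) (eps / (C + 1)))
    as [N0 HN0]; [apply Rdiv_lt_0_compat; lra|].
  exists N0. intros N HN. specialize (HN0 N HN).
  rewrite Rabs_pos_eq in HN0 by (apply pow_le; lra).
  apply Rle_trans with (C * (eps / (C + 1))); [apply Rmult_le_compat_l; lra|].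
  unfold Rdiv. apply (Rmult_le_reg_r (C + 1)); [lra|].
  rewrite Rmult_assoc, (Rmult_assoc eps), Rinv_l by lra. nra.
Qed.

Lemma peval_cv_uniform (g : nat -> Cplx) rho :
  (forall z, Cmod z < 1 -> exists s, Cseries (fun k => Cmul (g k) (Cpow z k)) s) ->
  0 <= rho < 1 -> forall eps, 0 < eps ->
  exists N0, forall N, (N0 <= N)%nat -> forall z s, Cmod z <= rho ->
    Cseries (fun k => Cmul (g k) (Cpow z k)) s -> Cmod (Csub (peval g N z) s) <= eps.
Proof.
  intros Hcv Hrho eps Heps.
  (* The terms are bounded at radius r' = (1 + rho)/2, so on |z| <= rho they decay
     like (rho/r')^k. *)
  set (r' := (1 + rho) / 2).
  destruct (Hcv (r', 0)) as [s' Hs']; [rewrite Cmod_real, Rabs_pos_eq; unfold r'; lra|].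
  destruct (Cseries_terms_bounded _ _ Hs') as [B HB].
  assert (HB' : forall k, Cmod (g k) * r' ^ k <= B).
  { intros k. specialize (HB k).
    rewrite Cmod_mul, Cpow_real, Cmod_real, Rabs_pos_eq in HB by (apply pow_le; unfold r'; lra).
    exact HB. }
  assert (HB0 : 0 <= B)
    by (specialize (HB' 0%nat); pose proof (Cmod_ge0 (g 0%nat)); simpl in HB'; lra).
  set (q := rho / r').
  assert (Hqr : q * r' = rho) by (unfold q, r'; field; lra).
  assert (Hq : 0 <= q < 1) by (unfold r' in Hqr; split; nra).
  assert (Hterm : forall z k, Cmod z <= rho -> Cmod (Cmul (g k) (Cpow z k)) <= B * q ^ k).
  { intros z k Hz. rewrite Cmod_mul, Cmod_pow.
    assert (Cmod z ^ k <= q ^ k * r' ^ k)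
      by (rewrite <- Rpow_mult_distr, Hqr; apply pow_incr; split; [apply Cmod_ge0 | exact Hz]).
    specialize (HB' k). pose proof (Cmod_ge0 (g k)). pose proof (pow_le q k (proj1 Hq)).
    nra. }
  destruct (geometric_eventually_le (2 * B * q / (1 - q)) q eps Hq) as [N0 HN0]; [|exact Heps|].
  { unfold Rdiv. apply Rmult_le_pos; [nra | left; apply Rinv_0_lt_compat; lra]. }
  exists N0. intros N HN z s Hz Hs.
  eapply Rle_trans; [apply (Cseries_tail_le _ _ B q N Hq (fun k => Hterm z k Hz) Hs)|].
  replace (2 * (B * q ^ S N / (1 - q))) with (2 * B * q / (1 - q) * q ^ N)
    by (simpl; field; lra).
  exact (HN0 N HN).
Qed.

(** * Comparing coefficients through values on circles *)

Lemma energy_mono (c : nat -> Cplx) m N rho : (m <= N)%nat -> energy c m rho <= energy c N rho.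
Proof.
  intros HmN. apply partial_sum_mono; [|exact HmN]. intros j.
  apply Rmult_le_pos; [apply Cnorm2_ge0|]. rewrite pow_mult. apply pow_le. nra.
Qed.

Lemma energy_le_of_uniform_approx (G p : nat -> Cplx) (m : nat) (rho : R) :
  (forall eps, 0 < eps -> exists N0, forall N, (N0 <= N)%nat -> forall phi,
      Cnorm2 (peval G N (Cpolar rho phi)) <= Cnorm2 (peval p m (Cpolar rho phi)) + eps) ->
  energy G m rho <= energy p m rho.
Proof.
  intros Happrox. apply Rle_plus_epsilon. intros eps Heps.
  (* Parseval at the (N+1)-st roots of unity, with N >= m large enough. *)
  destruct (Happrox eps Heps) as [N0 HN0].
  set (N := Nat.max N0 m).
  assert (HM : 0 < INR (S N)) by (apply lt_0_INR; lia).
  pose proof (discrete_parseval G N (S N) rho ltac:(lia)) as PG.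
  pose proof (discrete_parseval p m (S N) rho ltac:(lia)) as PP.
  simpl pred in PG, PP.
  set (th := 2 * PI / INR (S N)) in PG, PP.
  assert (Hle : sum_f_R0 (fun k => Cnorm2 (peval G N (Cpolar rho (INR k * th)))) N
             <= sum_f_R0 (fun k => Cnorm2 (peval p m (Cpolar rho (INR k * th))) + eps) N)
    by (apply sum_Rle; intros; apply HN0; lia).
  rewrite sum_plus, sum_cte, PG, PP in Hle.
  pose proof (energy_mono G m N rho ltac:(lia)).
  apply (Rmult_le_reg_l (INR (S N))); nra.
Qed.

Lemma pow_bernoulli x n : 0 <= x <= 1 -> 1 - INR n * (1 - x) <= x ^ n.
Proof.
  intros Hx. induction n as [|n IH]; [simpl; lra|].
  rewrite S_INR. simpl. pose proof (pos_INR n).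
  assert (0 <= INR n * (1 - x) * (1 - x)) by (apply Rmult_le_pos; [apply Rmult_le_pos|]; lra).
  nra.
Qed.

Lemma pow_antimono x j m : 0 <= x <= 1 -> (j <= m)%nat -> x ^ m <= x ^ j.
Proof.
  intros Hx Hjm. replace m with (j + (m - j))%nat by lia. rewrite pow_add.
  pose proof (pow_le x j (proj1 Hx)). pose proof (pow_incr x 1 (m - j) Hx).
  rewrite pow1 in *. nra.
Qed.

Lemma le_of_pow_mul_le X Y m :
  0 <= X -> (forall rho, 0 < rho < 1 -> X * rho ^ m <= Y) -> X <= Y.
Proof.
  intros HX H. apply Rle_plus_epsilon. intros eps Heps.
  pose proof (pos_INR m).
  set (d := Rmin (1 / 2) (eps / (INR m * X + 1))).
  assert (Hd : 0 < d <= 1 / 2).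
  { split; [apply Rmin_glb_lt; [lra | apply Rdiv_lt_0_compat; nra] | apply Rmin_l]. }
  assert (Hde : d * (INR m * X + 1) <= eps).
  { apply (Rmult_le_reg_r (/ (INR m * X + 1))); [apply Rinv_0_lt_compat; nra|].
    rewrite Rmult_assoc, Rinv_r by nra. rewrite Rmult_1_r. apply Rmin_r. }
  specialize (H (1 - d) ltac:(lra)).
  pose proof (pow_bernoulli (1 - d) m ltac:(lra)). nra.
Qed.

Lemma energy_1 (c : nat -> Cplx) n : energy c n 1 = sum_f_R0 (fun j => Cnorm2 (c j)) n.
Proof. unfold energy. apply sum_eq; intros. rewrite pow1. ring. Qed.

Lemma energy_1_le (c : nat -> Cplx) n Y :
  (forall rho, 0 < rho < 1 -> energy c n rho <= Y) -> energy c n 1 <= Y.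
Proof.
  intros H. apply (le_of_pow_mul_le _ _ (2 * n)).
  - rewrite energy_1. apply cond_pos_sum. intros; apply Cnorm2_ge0.
  - intros rho Hrho. eapply Rle_trans; [|exact (H rho Hrho)].
    rewrite energy_1, Rmult_comm, scal_sum. apply sum_Rle. intros j Hj.
    apply Rmult_le_compat_l; [apply Cnorm2_ge0 | apply pow_antimono; [lra | lia]].
Qed.

(** * Multiplication by 1 + nu z^(m+1) *)

Lemma Csum_ext f h n : (forall i, (i <= n)%nat -> f i = h i) -> Csum f n = Csum h n.
Proof. intros H. unfold Csum. f_equal; apply sum_eq; intros; now rewrite H. Qed.

Lemma Csum_add f h n : Csum (fun i => Cadd (f i) (h i)) n = Cadd (Csum f n) (Csum h n).
Proof. unfold Csum, Cadd; simpl. f_equal; apply sum_plus. Qed.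

Lemma Csum_mul_l w f n : Csum (fun i => Cmul w (f i)) n = Cmul w (Csum f n).
Proof.
  unfold Csum, Cmul; simpl. f_equal.
  - rewrite !sum_mul_l, <- minus_sum. apply sum_eq; intros; ring.
  - rewrite !sum_mul_l, <- sum_plus. apply sum_eq; intros; ring.
Qed.

Lemma Csum_shift (F : nat -> Cplx) m d :
  Csum (fun j => if Nat.leb m j then F (j - m)%nat else (0, 0)) (m + d) = Csum F d.
Proof.
  induction d as [|d IH].
  - rewrite Nat.add_0_r. destruct m as [|m]; [reflexivity|].
    change (Csum ?f (S m)) with (Cadd (Csum f m) (f (S m))); cbv beta.
    rewrite Nat.leb_refl, Nat.sub_diag, (Csum_ext _ (fun _ => (0, 0))).
    + unfold Csum, Cadd; simpl. rewrite !sum_cte. f_equal; ring.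
    + intros i Hi. replace (Nat.leb (S m) i) with false by (symmetry; apply Nat.leb_gt; lia).
      reflexivity.
  - rewrite Nat.add_succ_r.
    change (Csum ?f (S ?n)) with (Cadd (Csum f n) (f (S n))); cbv beta. rewrite IH.
    replace (Nat.leb m (S (m + d))) with true by (symmetry; apply Nat.leb_le; lia).
    now replace (S (m + d) - m)%nat with (S d) by lia.
Qed.

Lemma peval_S c n z : peval c (S n) z = Cadd (peval c n z) (Cmul (c (S n)) (Cpow z (S n))).
Proof. reflexivity. Qed.

(* Coefficients of [1 + nu z^(m+1)] and of [g(z) (1 + nu z^(m+1))]. *)
Definition binom_coeffs (nu : Cplx) (m j : nat) : Cplx :=
  if Nat.eqb j 0 then (1, 0) else if Nat.eqb j (S m) then nu else (0, 0).

Definition binom_mul_coeffs (g : nat -> Cplx) (nu : Cplx) (m j : nat) : Cplx :=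
  Cadd (g j) (if Nat.leb (S m) j then Cmul nu (g (j - S m)%nat) else (0, 0)).

Lemma peval_binom nu m z :
  peval (binom_coeffs nu m) (S m) z = Cadd (1, 0) (Cmul nu (Cpow z (S m))).
Proof.
  assert (Hlow : forall k, (k <= m)%nat -> peval (binom_coeffs nu m) k z = (1, 0)).
  { induction k as [|k IH]; intros Hk.
    - unfold peval, Csum, binom_coeffs, Cmul; simpl. f_equal; ring.
    - rewrite peval_S, IH by lia. unfold binom_coeffs. simpl Nat.eqb at 1.
      replace (Nat.eqb (S k) (S m)) with false by (symmetry; apply Nat.eqb_neq; lia).
      unfold Cadd, Cmul; simpl. f_equal; ring. }
  rewrite peval_S, Hlow by lia. unfold binom_coeffs. simpl Nat.eqb at 1.
  now rewrite Nat.eqb_refl.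
Qed.

Lemma energy_binom_le nu m rho : 0 <= rho <= 1 ->
  energy (binom_coeffs nu m) (S m) rho <= 1 + Cnorm2 nu.
Proof.
  intros Hrho. unfold energy. rewrite tech5.
  rewrite (sum_eq _ (fun l => rho ^ (2 * l) * (if Nat.eqb 0 l then 1 else 0))).
  - rewrite sum_delta by lia. unfold binom_coeffs. simpl Nat.eqb at 1. rewrite Nat.eqb_refl.
    pose proof (Cnorm2_ge0 nu).
    pose proof (pow_antimono rho 0 (2 * S m) Hrho ltac:(lia)).
    pose proof (pow_le rho (2 * S m) (proj1 Hrho)). simpl in *. nra.
  - intros l Hl. unfold binom_coeffs. destruct l as [|l]; simpl Nat.eqb.
    + unfold Cnorm2; simpl. ring.
    + replace (Nat.eqb l m) with false by (symmetry; apply Nat.eqb_neq; lia).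
      unfold Cnorm2; simpl. ring.
Qed.

Lemma peval_binom_mul g nu m N z : (S m <= N)%nat ->
  peval (binom_mul_coeffs g nu m) N z =
  Cadd (peval g N z) (Cmul nu (Cmul (Cpow z (S m)) (peval g (N - S m) z))).
Proof.
  intros HN. unfold peval, binom_mul_coeffs.
  rewrite (Csum_ext _ (fun j => Cadd (Cmul (g j) (Cpow z j))
    (if Nat.leb (S m) j
     then Cmul (Cmul nu (Cpow z (S m))) (Cmul (g (j - S m)%nat) (Cpow z (j - S m)%nat))
     else (0, 0)))).
  - rewrite Csum_add. f_equal.
    replace N with (S m + (N - S m))%nat at 1 by lia.
    rewrite (Csum_shift (fun k => Cmul (Cmul nu (Cpow z (S m))) (Cmul (g k) (Cpow z k)))),
      Csum_mul_l.
    destruct nu, (Cpow z (S m)), (Csum _ _); unfold Cmul; simpl; f_equal; ring.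
  - intros i Hi. destruct (Nat.leb (S m) i) eqn:E.
    + apply Nat.leb_le in E.
      replace (Cpow z i) with (Cmul (Cpow z (i - S m)) (Cpow z (S m)))
        by (rewrite <- Cpow_add; f_equal; lia).
      destruct (g i), nu, (g (i - S m)%nat), (Cpow z (i - S m)%nat), (Cpow z (S m)).
      unfold Cadd, Cmul; simpl; f_equal; ring.
    + destruct (g i), (Cpow z i). unfold Cadd, Cmul; simpl; f_equal; ring.
Qed.

Lemma energy_1_binom_mul g nu m :
  energy (binom_mul_coeffs g nu m) (S m) 1 =
  energy g m 1 + Cnorm2 (Cadd (g (S m)) (Cmul nu (g 0%nat))).
Proof.
  rewrite !energy_1, tech5. f_equal.
  - apply sum_eq. intros j Hj. unfold binom_mul_coeffs.
    replace (Nat.leb (S m) j) with false by (symmetry; apply Nat.leb_gt; lia).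
    destruct (g j). unfold Cnorm2, Cadd; simpl. ring.
  - unfold binom_mul_coeffs. now rewrite Nat.leb_refl, Nat.sub_diag.
Qed.

(** * Schur functions *)

Definition is_schur (g : nat -> Cplx) : Prop :=
  forall z, Cmod z < 1 ->
    exists s, Cseries (fun k => Cmul (g k) (Cpow z k)) s /\ Cmod s <= 1.

Lemma sq_le_of_le_add x y K d :
  0 <= y -> 0 <= x <= K -> 0 <= d <= 1 -> y <= x + d * K ->
  y ^ 2 <= x ^ 2 + d * (3 * K ^ 2).
Proof.
  intros Hy Hx Hd Hyx.
  assert (y ^ 2 <= (x + d * K) ^ 2) by (apply pow_incr; lra).
  assert (d * K * (2 * x + d * K) <= d * (3 * K ^ 2)).
  { assert (0 <= d * K) by nra. assert (2 * x + d * K <= 3 * K) by nra. nra. }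
  nra.
Qed.

Lemma Cadd_mul_split a b s nu w :
  Cadd a (Cmul nu (Cmul w b)) =
  Cadd (Cmul s (Cadd (1, 0) (Cmul nu w))) (Cadd (Csub a s) (Cmul nu (Cmul w (Csub b s)))).
Proof. destruct a, b, s, nu, w; unfold Cadd, Cmul, Csub; simpl; f_equal; ring. Qed.

Section SchurFunction.

Variable g : nat -> Cplx.
Hypothesis Hschur : is_schur g.

Lemma schur_binom_mul_approx nu m rho : 0 < rho < 1 ->
  forall eps, 0 < eps -> exists N0, forall N, (N0 <= N)%nat -> forall phi,
    Cnorm2 (peval (binom_mul_coeffs g nu m) N (Cpolar rho phi))
    <= Cnorm2 (peval (binom_coeffs nu m) (S m) (Cpolar rho phi)) + eps.
Proof.
  intros Hrho eps Heps.
  set (K := 1 + Cmod nu).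
  assert (HK : 1 <= K) by (pose proof (Cmod_ge0 nu); unfold K; lra).
  set (d := Rmin 1 (eps / (3 * K ^ 2))).
  assert (Hd : 0 < d <= 1)
    by (split; [apply Rmin_glb_lt; [lra | apply Rdiv_lt_0_compat; nra] | apply Rmin_l]).
  assert (Hde : d * (3 * K ^ 2) <= eps).
  { apply (Rmult_le_reg_r (/ (3 * K ^ 2))); [apply Rinv_0_lt_compat; nra|].
    rewrite Rmult_assoc, Rinv_r, Rmult_1_r by nra. apply Rmin_r. }
  assert (Hcv : forall z, Cmod z < 1 -> exists s, Cseries (fun k => Cmul (g k) (Cpow z k)) s)
    by (intros z Hz; destruct (Hschur z Hz) as [s [Hs _]]; eauto).
  destruct (peval_cv_uniform g rho Hcv ltac:(lra) d (proj1 Hd)) as [N0 HN0].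
  exists (N0 + S m)%nat. intros N HN phi.
  set (z := Cpolar rho phi).
  assert (Hz : Cmod z = rho) by (apply Cmod_polar; lra).
  destruct (Hschur z ltac:(lra)) as [s [Hs Hs1]].
  pose proof (HN0 N ltac:(lia) z s ltac:(lra) Hs) as Herr.
  pose proof (HN0 (N - S m)%nat ltac:(lia) z s ltac:(lra) Hs) as Herr'.
  (* With s = g(z):
     G_N(z) = s (1 + nu z^(m+1)) + (g_N(z) - s) + nu z^(m+1) (g_(N-m-1)(z) - s),
     where |s| <= 1 and both tails are uniformly small. *)
  rewrite peval_binom_mul, peval_binom, (Cadd_mul_split _ _ s) by lia.
  set (P := Cadd (1, 0) (Cmul nu (Cpow z (S m)))).
  assert (Hzm : Cmod (Cpow z (S m)) <= 1).
  { rewrite Cmod_pow, Hz. pose proof (pow_antimono rho 0 (S m) ltac:(lra) ltac:(lia)).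
    simpl in *. lra. }
  assert (HP : Cmod P <= K).
  { unfold P. eapply Rle_trans; [apply Cmod_add_le|].
    rewrite Cmod_real, Rabs_R1, Cmod_mul. pose proof (Cmod_ge0 nu). unfold K. nra. }
  set (Q := Cadd (Cmul s P) (Cadd (Csub (peval g N z) s)
              (Cmul nu (Cmul (Cpow z (S m)) (Csub (peval g (N - S m) z) s))))).
  assert (HQ : Cmod Q <= Cmod P + d * K).
  { eapply Rle_trans; [apply Cmod_add_le|].
    eapply Rle_trans; [apply Rplus_le_compat_l, Cmod_add_le|].
    rewrite !Cmod_mul.
    pose proof (Cmod_ge0 nu). pose proof (Cmod_ge0 P). pose proof (Cmod_ge0 (Cpow z (S m))).
    pose proof (Cmod_ge0 (Csub (peval g (N - S m) z) s)). pose proof (Cmod_ge0 s).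
    assert (Cmod (Cpow z (S m)) * Cmod (Csub (peval g (N - S m) z) s) <= d) by nra.
    unfold K. nra. }
  rewrite <- !Cmod_sq.
  pose proof (sq_le_of_le_add (Cmod P) (Cmod Q) K d (Cmod_ge0 Q)
    (conj (Cmod_ge0 P) HP) (conj (Rlt_le _ _ (proj1 Hd)) (proj2 Hd)) HQ).
  lra.
Qed.

Lemma schur_energy_1_binom_mul nu m :
  energy (binom_mul_coeffs g nu m) (S m) 1 <= 1 + Cnorm2 nu.
Proof.
  apply energy_1_le. intros rho Hrho.
  eapply Rle_trans; [apply energy_le_of_uniform_approx, schur_binom_mul_approx, Hrho |].
  apply energy_binom_le. lra.
Qed.

Variable gam : R.
Hypotheses (Hgam : 0 <= gam < 1) (Hg0 : g 0%nat = (gam, 0)).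

Lemma schur_coeff_step m : Cnorm2 (g (S m)) <= (1 - gam ^ 2) * (1 - energy g m 1).
Proof.
  (* t = gam / (1 - gam^2) maximizes (1 + t gam)^2 - t^2, with maximum 1 / (1 - gam^2). *)
  set (t := gam / (1 - gam ^ 2)).
  pose proof (schur_energy_1_binom_mul (Cscale t (g (S m))) m) as H.
  rewrite energy_1_binom_mul, Hg0, Cnorm2_scale in H.
  replace (Cadd (g (S m)) (Cmul (Cscale t (g (S m))) (gam, 0)))
    with (Cscale (1 + t * gam) (g (S m))) in H
    by (destruct (g (S m)); unfold Cadd, Cmul, Cscale; simpl; f_equal; ring).
  rewrite Cnorm2_scale in H.
  assert (Hid : (1 + t * gam) ^ 2 - t ^ 2 = / (1 - gam ^ 2)) by (unfold t; field; nra).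
  assert (Hquot : Cnorm2 (g (S m)) * / (1 - gam ^ 2) <= 1 - energy g m 1)
    by (rewrite <- Hid; lra).
  replace (Cnorm2 (g (S m))) with ((1 - gam ^ 2) * (Cnorm2 (g (S m)) * / (1 - gam ^ 2)))
    by (field; nra).
  apply Rmult_le_compat_l; nra.
Qed.

Lemma schur_coeff_partial_sums p :
  sum_f_R0 (fun i => Cnorm2 (g (S i))) p <= (1 - gam ^ 2) * (1 - (gam ^ 2) ^ S p).
Proof.
  assert (Hg0n : Cnorm2 (g 0%nat) = gam ^ 2) by (rewrite Hg0; unfold Cnorm2; simpl; ring).
  induction p as [|p IH].
  - pose proof (schur_coeff_step 0) as H.
    rewrite energy_1 in H. simpl sum_f_R0 in H |- *. rewrite Hg0n in H. rewrite pow_1. lra.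
  - pose proof (schur_coeff_step (S p)) as H.
    rewrite energy_1, decomp_sum, Hg0n in H by lia. simpl pred in H.
    rewrite tech5. change ((gam ^ 2) ^ S (S p)) with (gam ^ 2 * (gam ^ 2) ^ S p).
    assert (gam ^ 2 * sum_f_R0 (fun i => Cnorm2 (g (S i))) p
            <= gam ^ 2 * ((1 - gam ^ 2) * (1 - (gam ^ 2) ^ S p)))
      by (apply Rmult_le_compat_l; nra).
    nra.
Qed.

End SchurFunction.

(** * Functions of class B *)

Lemma pow_div_succ_antitone T i : 0 < T <= 1 ->
  T ^ S (S i) / INR (S (S (S i))) <= T ^ S i / INR (S (S i)).
Proof.
  intros HT. pose proof (pow_le T (S i) ltac:(lra)).
  assert (0 < INR (S (S i))) by (apply lt_0_INR; lia).
  unfold Rdiv. apply Rmult_le_compat.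
  - apply pow_le; lra.
  - left. apply Rinv_0_lt_compat, lt_0_INR. lia.
  - simpl in *. nra.
  - apply Rinv_le_contravar; [lra | apply le_INR; lia].
Qed.

Lemma Cseries_ext f h s : (forall k, f k = h k) -> Cseries f s -> Cseries h s.
Proof.
  intros E [Hre Him]. split; eapply Un_cv_ext; try eassumption;
    intros; apply sum_eq; intros; now rewrite E.
Qed.

Lemma Cseries_scale f s c : Cseries f s -> Cseries (fun k => Cscale c (f k)) (Cscale c s).
Proof.
  intros [Hre Him].
  split; (eapply Un_cv_ext; [|apply Un_cv_scal; eassumption]); intros; apply sum_mul_l.
Qed.

Lemma inv_sqrt3_sq : (/ sqrt 3) ^ 2 = / 3.
Proof. rewrite pow_inv, pow2_sqrt by lra. reflexivity. Qed.

(* The Taylor coefficients of [(2/3) F'(w / sqrt 3)]. *)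
Definition rescaled_derivative (b : nat -> Cplx) (j : nat) : Cplx :=
  Cscale (2 / 3 * (/ sqrt 3) ^ j * INR (S j)) (b (S j)).

Lemma rescaled_derivative_schur b : in_class_B b -> is_schur (rescaled_derivative b).
Proof.
  intros HB w Hw.
  set (s := / sqrt 3).
  assert (Hs2 : s ^ 2 = / 3) by apply inv_sqrt3_sq.
  assert (Hs : 0 < s) by (apply Rinv_0_lt_compat, sqrt_lt_R0; lra).
  set (z := Cscale s w).
  assert (Hz : Cmod z = s * Cmod w) by (unfold z; rewrite Cmod_scale, Rabs_pos_eq; lra).
  assert (Hz2 : Cmod z ^ 2 < / 3).
  { pose proof (Cmod_ge0 w). rewrite Hz, Rpow_mult_distr, Hs2.
    assert (Cmod w ^ 2 < 1) by nra. lra. }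
  destruct (HB z ltac:(nra)) as [_ [W [HW HWb]]].
  exists (Cscale (2 / 3) W). split.
  - eapply Cseries_ext; [|exact (Cseries_scale _ _ (2 / 3) HW)].
    intros k. unfold z. rewrite Cpow_scale. unfold rescaled_derivative. fold s.
    destruct (b (S k)), (Cpow w k). unfold Cscale, Cmul; simpl. f_equal; ring.
  - rewrite Cmod_scale, Rabs_pos_eq by lra.
    assert (1 / (1 - Cmod z ^ 2) <= 3 / 2).
    { apply (Rmult_le_reg_r (1 - Cmod z ^ 2)); [lra|].
      unfold Rdiv. rewrite Rmult_assoc, Rinv_l by lra. lra. }
    lra.
Qed.

Lemma rescaled_derivative_term b r i :
  INR (i + 2) * Cmod (b (i + 2)%nat) ^ 2 * r ^ (2 * (i + 2))
  = 9 / 4 * r ^ 2 *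
    (Cnorm2 (rescaled_derivative b (S i)) * ((3 * r ^ 2) ^ S i / INR (S (S i)))).
Proof.
  replace (i + 2)%nat with (S (S i)) by lia.
  unfold rescaled_derivative. rewrite Cnorm2_scale, Cmod_sq.
  assert (E : ((/ sqrt 3) ^ S i) ^ 2 * (3 * r ^ 2) ^ S i = (r ^ 2) ^ S i).
  { rewrite <- pow_mult, Nat.mul_comm, pow_mult, <- Rpow_mult_distr, inv_sqrt3_sq.
    f_equal. field. }
  rewrite (pow_mult r 2 (S (S i))).
  change ((r ^ 2) ^ S (S i)) with (r ^ 2 * (r ^ 2) ^ S i). rewrite <- E.
  assert (0 < INR (S (S i))) by (apply lt_0_INR; lia).
  field. lra.
Qed.

Lemma geometric_majorant_term a r i : 0 < a < 1 ->
  3 * (9 - 4 * a ^ 2) ^ 2 / (64 * a ^ 4) * (/ INR (i + 2) * (4 / 3 * a ^ 2 * r ^ 2) ^ (i + 2))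
  = 9 / 4 * r ^ 2 *
    ((1 - (2 * a / 3) ^ 2) ^ 2 * ((2 * a / 3) ^ 2) ^ i * ((3 * r ^ 2) ^ S i / INR (S (S i)))).
Proof.
  intros Ha. replace (i + 2)%nat with (S (S i)) by lia.
  replace (4 / 3 * a ^ 2 * r ^ 2) with ((2 * a / 3) ^ 2 * (3 * r ^ 2)) by field.
  rewrite Rpow_mult_distr.
  change (((2 * a / 3) ^ 2) ^ S (S i))
    with ((2 * a / 3) ^ 2 * ((2 * a / 3) ^ 2 * ((2 * a / 3) ^ 2) ^ i)).
  change ((3 * r ^ 2) ^ S (S i)) with (3 * r ^ 2 * (3 * r ^ 2) ^ S i).
  assert (0 < INR (S (S i))) by (apply lt_0_INR; lia).
  field. nra.
Qed.

Lemma three_sq_le_1 r : 0 < r <= 1 / sqrt 3 -> 0 < 3 * r ^ 2 <= 1.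
Proof.
  intros Hr. split; [nra|].
  assert (Hr' : r <= / sqrt 3) by lra.
  pose proof (pow_incr r (/ sqrt 3) 2 ltac:(lra)) as H.
  rewrite inv_sqrt3_sq in H. lra.
Qed.

Theorem theorem4 (b : nat -> Cplx) (a r : R) (n : nat) :
  in_class_B b ->
  b 1%nat = (a, 0) ->
  0 < a < 1 ->
  0 < r <= 1 / sqrt 3 ->
  (2 <= n)%nat ->
  sum_f 2 n (fun k => INR k * Cmod (b k) ^ 2 * r ^ (2 * k))
  <= 3 * (9 - 4 * a ^ 2) ^ 2 / (64 * a ^ 4)
     * sum_f 2 n (fun k => / INR k * (4 / 3 * a ^ 2 * r ^ 2) ^ k).
Proof.
  intros HB Hb1 Ha Hr _.
  set (gam := 2 * a / 3).
  set (g := rescaled_derivative b).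
  set (w := fun i : nat => (3 * r ^ 2) ^ S i / INR (S (S i))).
  pose proof (three_sq_le_1 r Hr) as HT.
  assert (Hg0 : g 0%nat = (gam, 0)).
  { unfold g, rescaled_derivative. rewrite Hb1. unfold Cscale, gam; simpl. f_equal; field. }
  assert (Hdom : forall p, sum_f_R0 (fun i => Cnorm2 (g (S i))) p
                          <= sum_f_R0 (fun i => (1 - gam ^ 2) ^ 2 * (gam ^ 2) ^ i) p).
  { intros p. rewrite sum_geometric_scaled.
    apply (schur_coeff_partial_sums g (rescaled_derivative_schur b HB));
      [unfold gam; lra | exact Hg0]. }
  assert (Hw : forall i, 0 <= w i).
  { intros i. unfold w, Rdiv. apply Rmult_le_pos; [apply pow_le; lra|].
    left. apply Rinv_0_lt_compat, lt_0_INR. lia. }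
  pose proof (sum_mul_antitone_le _ _ w (fun i => pow_div_succ_antitone _ i HT) Hw Hdom (n - 2))
    as Habel.
  unfold sum_f. cbv beta. rewrite sum_mul_l.
  rewrite (sum_eq _ _ (n - 2) (fun i _ => rescaled_derivative_term b r i)),
    (sum_eq _ _ (n - 2) (fun i _ => geometric_majorant_term a r i Ha)), <- !sum_mul_l.
  apply Rmult_le_compat_l; [nra | exact Habel].
Qed.
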